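(* Let $x_0<\dots<x_n$ and $\hat x_0<\dots<\hat x_n$ be real numbers with $\hat x_0=x_0$, $\hat x_n=x_n$, let $\mathbf{y}\in\mathbb{R}^{n+1}$, let $z_k=z_k(\mathbf{x},\hat{\mathbf{x}})$, and suppose $\Lambda(\hat{\mathbf{x}})\|\mathbf{z}\|_\infty<1$. Then for every $t\in[x_0,x_n]$, \[ \frac{|E(t;\mathbf{y},\mathbf{z})|}{1+\Lambda(\hat{\mathbf{x}})\|\mathbf{z}\|_\infty}\ \le\ \bigl|q(t;\hat{\mathbf{x}},\mathbf{y},\lambda(\mathbf{x}))-P_{\mathbf{y}}(t)\bigr|\ \le\ \frac{|E(t;\mathbf{y},\mathbf{z})|}{1-\Lambda(\hat{\mathbf{x}})\|\mathbf{z}\|_\infty}, \] and for each such $t$ there exists $\mathbf{y}'\in\mathbb{R}^{n+1}$ with $q(t;\hat{\mathbf{x}},\mathbf{y},\lambda(\mathbf{x}))=P_{\mathbf{y}'}(t)$ and \[ |y'_k-y_k|\le\frac{|z_k|+\Lambda(\hat{\mathbf{x}})\|\mathbf{z}\|_\infty}{1-\Lambda(\hat{\mathbf{x}})\|\mathbf{z}\|_\infty}\,|y_k|\qquad(0\le k\le n). \]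
   Context: $\lambda_k(\mathbf{x}):=1/\prod_{j\neq k}(x_k-x_j)$; $z_k(\mathbf{x},\hat{\mathbf{x}}):=(\lambda_k(\mathbf{x})-\lambda_k(\hat{\mathbf{x}}))/\lambda_k(\hat{\mathbf{x}})$. The second barycentric formula is $q(t;\mathbf{u},\mathbf{y},\mathbf{w}):=\dfrac{\sum_{k}\frac{w_ky_k}{t-u_k}}{\sum_k\frac{w_k}{t-u_k}}$, with value $y_k$ at $t=u_k$ (its limit). For $\mathbf{v}\in\mathbb{R}^{n+1}$, $P_{\mathbf{v}}$ is the polynomial of degree $\le n$ with $P_{\mathbf{v}}(\hat x_k)=v_k$; $\mathbf{y}\mathbf{z}$ is the componentwise product. The error polynomial is $E(t;\mathbf{y},\mathbf{z}):=P_{\mathbf{y}\mathbf{z}}(t)-P_{\mathbf{y}}(t)P_{\mathbf{z}}(t)$. $\Lambda(\hat{\mathbf{x}}):=\max_{t\in[x_0,x_n]}\sum_j|\ell_j(t)|$ with $\ell_j$ the Lagrange polynomials for $\hat{\mathbf{x}}$. *)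

From HB Require Import structures.
From mathcomp Require Import all_boot all_order all_algebra.
From mathcomp Require Import boolp classical_sets reals.
Set Implicit Arguments. Unset Strict Implicit. Unset Printing Implicit Defensive.
Import Order.TTheory GRing.Theory Num.Theory.
Local Open Scope ring_scope.
Local Open Scope classical_set_scope.

Section Defs.
Variables (R : realType) (n : nat).
Implicit Types (x u xh v y w : 'I_n.+1 -> R) (t : R).

Definition bary_lambda x (k : 'I_n.+1) : R :=
  (\prod_(j < n.+1 | j != k) (x k - x j))^-1.

Definition zvec x xh (k : 'I_n.+1) : R :=
  (bary_lambda x k - bary_lambda xh k) / bary_lambda xh k.

Definition bary2 t u y w : R :=
  if [pick k | t == u k] is Some k then y k
  else (\sum_k w k * y k / (t - u k)) / (\sum_k w k / (t - u k)).

Definition lagr xh (j : 'I_n.+1) t : R :=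
  \prod_(i < n.+1 | i != j) ((t - xh i) / (xh j - xh i)).

Definition interp xh v t : R := \sum_j v j * lagr xh j t.

Definition vmul y w : 'I_n.+1 -> R := fun k => y k * w k.

Definition err_poly xh y w t : R :=
  interp xh (vmul y w) t - interp xh y t * interp xh w t.

Definition lebesgue xh : R :=
  sup [set (\sum_j `|lagr xh j t|) | t in [set t | xh ord0 <= t <= xh ord_max]].

Definition ninf w : R := \big[Num.max/0]_k `|w k|.

End Defs.

From HB Require Import structures.
From mathcomp Require Import all_boot all_order all_algebra.
From mathcomp Require Import reals.
From mathcomp Require Import zify ring lra.
Set Implicit Arguments.
Unset Strict Implicit.
Unset Printing Implicit Defensive.
Import Order.TTheory GRing.Theory Num.Theory.
Local Open Scope ring_scope.

(* Perturbing the nodes multiplies each barycentric weight: lambda_k(x) =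
   lambda_k(xh) (1 + z_k).  Off the nodes, lambda_k(xh)/(t - xh_k) is l_k(t)
   divided by the nodal polynomial, so by the partition of unity
   sum_k l_k = 1 the barycentric formula with the weights lambda(x) equals
   (P_y + P_yz) / (1 + P_z), hence q - P_y = E / (1 + P_z), and q is the
   interpolant of y'_k = (1 + z_k) y_k / (1 + P_z).  Both claims then follow
   from the Lebesgue bound |P_z(t)| <= Lambda ||z||. *)

Section RealBounds.
Variable R : realFieldType.
Implicit Types (e c w L : R).

Lemma norm_div_one_add_bounds e c L : `|c| <= L -> L < 1 ->
  `|e| / (1 + L) <= `|e / (1 + c)| <= `|e| / (1 - L).
Proof.
move=> cL L1; have /ler_normlP[Nc_le c_le] := cL.
have c_gt : 0 < 1 + c by lra.
rewrite normrM normfV (gtr0_norm c_gt).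
by apply/andP; split; rewrite ler_wpM2l // lef_pV2 ?posrE; lra.
Qed.

Lemma norm_sub_div_one_add_le w c L : `|c| <= L -> L < 1 ->
  `|(w - c) / (1 + c)| <= (`|w| + L) / (1 - L).
Proof.
move=> cL L1; have /ler_normlP[Nc_le c_le] := cL.
have c_gt : 0 < 1 + c by lra.
rewrite normrM normfV (gtr0_norm c_gt); apply: ler_pM.
- exact: normr_ge0.
- by rewrite invr_ge0 ltW.
- by apply: le_trans (ler_normB _ _) _; rewrite lerD2l.
- by rewrite lef_pV2 ?posrE; lra.
Qed.

End RealBounds.

Section InfinityNorm.
Variables (R : realType) (n : nat).

Lemma norm_le_ninf (w : 'I_n.+1 -> R) k : `|w k| <= ninf w.
Proof. exact: le_bigmax. Qed.

Lemma ninf_ge0 (w : 'I_n.+1 -> R) : 0 <= ninf w.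
Proof. exact: le_trans (normr_ge0 _) (norm_le_ninf w ord0). Qed.

End InfinityNorm.

Section Nodes.
Variables (R : realType) (n : nat) (xh : 'I_n.+1 -> R).
Hypothesis xh_incr : forall i j : 'I_n.+1, (i < j)%N -> xh i < xh j.

Lemma nodes_inj : injective xh.
Proof.
move=> i j eij; apply: val_inj.
by case: (ltngtP i j) => // /xh_incr; rewrite eij ltxx.
Qed.

Lemma prod_nodes_sub_neq0 k : \prod_(j < n.+1 | j != k) (xh k - xh j) != 0.
Proof. by apply/prodf_neq0 => j jk; rewrite subr_eq0 (inj_eq nodes_inj) eq_sym. Qed.

Lemma bary_lambda_neq0 k : bary_lambda xh k != 0.
Proof. by rewrite invr_eq0 prod_nodes_sub_neq0. Qed.

Lemma lagr_baryE j t :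
  lagr xh j t = bary_lambda xh j * \prod_(i < n.+1 | i != j) (t - xh i).
Proof. by rewrite /lagr /bary_lambda big_split /= prodfV mulrC. Qed.

Lemma lagr_node j m : lagr xh j (xh m) = (j == m)%:R.
Proof.
rewrite lagr_baryE; have [<-|jm] := eqVneq j m.
  by rewrite mulVf ?prod_nodes_sub_neq0.
by rewrite (bigD1 m) 1?eq_sym //= subrr mul0r mulr0.
Qed.

Lemma interp_node (v : 'I_n.+1 -> R) k : interp xh v (xh k) = v k.
Proof.
rewrite /interp (bigD1 k) //= lagr_node eqxx mulr1 big1 ?addr0 // => j jk.
by rewrite lagr_node (negPf jk) mulr0.
Qed.

(* sum_j l_j - 1 has degree <= n and vanishes at the n + 1 nodes. *)
Lemma sum_lagr t : \sum_j lagr xh j t = 1.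
Proof.
pose p : {poly R} :=
  \sum_j (bary_lambda xh j)%:P * \prod_(i < n.+1 | i != j) ('X - (xh i)%:P) - 1.
have p_hornerE s : p.[s] = \sum_j lagr xh j s - 1.
  rewrite hornerD hornerN hornerC horner_sum; congr (_ - _).
  apply: eq_bigr => j _; rewrite hornerM hornerC horner_prod lagr_baryE.
  by congr (_ * _); apply: eq_bigr => i _; rewrite hornerXsubC.
have size_p : (size p <= n.+1)%N.
  apply: leq_trans (size_polyD _ _) _; rewrite size_polyN size_poly1 geq_max andbT.
  apply: leq_trans (size_sum _ _ _) _; apply/bigmax_leqP => j _.
  rewrite mul_polyC; apply: leq_trans (size_scale_leq _ _) _.
  rewrite size_prod => [|i _]; last by rewrite polyXsubC_eq0.
  under eq_bigr do rewrite size_XsubC.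
  by rewrite sum_nat_const cardC1 card_ord; lia.
have p_eq0 : p = 0.
  apply: (@roots_geq_poly_eq0 _ p (map xh (enum 'I_n.+1))).
  - apply/allP => s /mapP[m _ ->]; rewrite /root p_hornerE.
    have := interp_node (fun=> 1) m; rewrite /interp.
    by under eq_bigr do rewrite mul1r; move=> ->; rewrite subrr.
  - by rewrite map_inj_uniq ?enum_uniq //; exact: nodes_inj.
  - by rewrite size_map size_enum_ord.
by apply/eqP; rewrite -subr_eq0 -p_hornerE p_eq0 horner0.
Qed.

Lemma sum_norm_lagr_le_lebesgue t : xh ord0 <= t <= xh ord_max ->
  \sum_j `|lagr xh j t| <= lebesgue xh.
Proof.
move=> /andP[t_ge t_le]; apply: sup_upper_bound; last by exists t => //; apply/andP.
split; first by exists (\sum_j `|lagr xh j t|), t => //; apply/andP.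
pose B := `|xh ord0| + `|xh ord_max|.
exists (\sum_j `|bary_lambda xh j| * \prod_(i < n.+1 | i != j) (B + `|xh i|)).
move=> r [s /andP[s_ge s_le] <-]; apply: ler_sum => j _.
rewrite lagr_baryE normrM ler_wpM2l // normr_prod; apply: ler_prod => i _.
rewrite normr_ge0 /=; apply: le_trans (ler_normB _ _) _; rewrite lerD2r.
have := ler_norm (xh ord_max); have := ler_norm (- xh ord0); rewrite normrN.
have := normr_ge0 (xh ord0); have := normr_ge0 (xh ord_max).
by rewrite ler_norml /B; lra.
Qed.

Lemma interp_norm_le_lebesgue (w : 'I_n.+1 -> R) t : xh ord0 <= t <= xh ord_max ->
  `|interp xh w t| <= lebesgue xh * ninf w.
Proof.
move=> t_in; rewrite mulrC; apply: le_trans (ler_norm_sum _ _ _) _.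
apply: le_trans (ler_wpM2l (ninf_ge0 w) (sum_norm_lagr_le_lebesgue t_in)).
rewrite mulr_sumr; apply: ler_sum => j _.
by rewrite normrM ler_wpM2r ?norm_le_ninf.
Qed.

End Nodes.

Section PerturbedNodes.
Variables (R : realType) (n : nat) (x xh y : 'I_n.+1 -> R).
Hypothesis x_incr : forall i j : 'I_n.+1, (i < j)%N -> x i < x j.
Hypothesis xh_incr : forall i j : 'I_n.+1, (i < j)%N -> xh i < xh j.

Lemma bary_lambda_perturbE k :
  bary_lambda x k = bary_lambda xh k * (1 + zvec x xh k).
Proof. by rewrite /zvec; field; rewrite bary_lambda_neq0. Qed.

Lemma one_add_zvec_neq0 k : 1 + zvec x xh k != 0.
Proof.
apply: contraTneq (bary_lambda_neq0 x_incr k) => z_eq.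
by rewrite bary_lambda_perturbE z_eq mulr0 eqxx.
Qed.

Lemma bary2_perturbE t : 1 + interp xh (zvec x xh) t != 0 ->
  bary2 t xh y (bary_lambda x) =
  (interp xh y t + interp xh (vmul y (zvec x xh)) t) / (1 + interp xh (zvec x xh) t).
Proof.
move=> Pz_neq0; rewrite /bary2; case: pickP => [k /eqP-> | t_off].
  rewrite !(interp_node xh_incr) /vmul -{2}[y k]mulr1 -mulrDr mulfK //.
  exact: one_add_zvec_neq0.
have t_sub_neq0 k : t - xh k != 0 by rewrite subr_eq0 t_off.
pose l := \prod_i (t - xh i).
have l_neq0 : l != 0 by apply/prodf_neq0 => i _.
have weightE k : bary_lambda x k / (t - xh k) = (1 + zvec x xh k) * lagr xh k t / l.
  rewrite bary_lambda_perturbE /l (bigD1 k) //= lagr_baryE.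
  have prod_neq0 : \prod_(i < n.+1 | i != k) (t - xh i) != 0.
    by apply/prodf_neq0 => i _.
  by field; rewrite prod_neq0 t_sub_neq0.
have -> : \sum_k bary_lambda x k * y k / (t - xh k) =
    (interp xh y t + interp xh (vmul y (zvec x xh)) t) / l.
  rewrite /interp /vmul -big_split /= mulr_suml; apply: eq_bigr => k _.
  by rewrite mulrAC weightE; field.
have -> : \sum_k bary_lambda x k / (t - xh k) = (1 + interp xh (zvec x xh) t) / l.
  rewrite -(sum_lagr xh_incr t) /interp -big_split /= mulr_suml.
  by apply: eq_bigr => k _; rewrite weightE; field.
by field; rewrite Pz_neq0 l_neq0.
Qed.

End PerturbedNodes.

Theorem theorem3 (R : realType) (n : nat) (x xh y : 'I_n.+1 -> R)
  (hx : forall i j : 'I_n.+1, (i < j)%N -> x i < x j)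
  (hxh : forall i j : 'I_n.+1, (i < j)%N -> xh i < xh j)
  (h0 : xh ord0 = x ord0) (hn : xh ord_max = x ord_max)
  (hL : lebesgue xh * ninf (zvec x xh) < 1) :
  forall t : R, x ord0 <= t <= x ord_max ->
    let z := zvec x xh in
    let L := lebesgue xh * ninf z in
    let qv := bary2 t xh y (bary_lambda x) in
    `|err_poly xh y z t| / (1 + L) <= `|qv - interp xh y t| /\
    `|qv - interp xh y t| <= `|err_poly xh y z t| / (1 - L) /\
    exists y' : 'I_n.+1 -> R,
      qv = interp xh y' t /\
      forall k : 'I_n.+1, `|y' k - y k| <= (`|z k| + L) / (1 - L) * `|y k|.
Proof.
move=> t t_in z L qv; set c := interp xh z t.
have L_lt1 : L < 1 by [].
have c_le : `|c| <= L by apply: interp_norm_le_lebesgue; rewrite // h0 hn.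
have c_neq0 : 1 + c != 0.
  by rewrite lt0r_neq0 //; have /ler_normlP[Nc_le c_le'] := c_le; lra.
have qvE := bary2_perturbE y hx hxh c_neq0; rewrite -/z -/c -/qv in qvE.
have errE : qv - interp xh y t = err_poly xh y z t / (1 + c).
  by rewrite qvE /err_poly -/c; field.
have /andP[err_ge err_le] := norm_div_one_add_bounds (err_poly xh y z t) c_le L_lt1.
rewrite errE.
do 2!split => //; exists (fun k => (1 + z k) * y k / (1 + c)); split.
  rewrite qvE /interp /vmul -big_split /= mulr_suml.
  by apply: eq_bigr => k _; field.
move=> k; have -> : (1 + z k) * y k / (1 + c) - y k = (z k - c) / (1 + c) * y k.
  by field.
by rewrite normrM ler_wpM2r ?norm_sub_div_one_add_le.
Qed.
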